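(* For every real $\alpha>0$ the series $\sum_{k=1}^{+\infty}\left(p^{(k)}_k\right)^{-\alpha}$ converges.
   Context: Let $p_n$ denote the $n$-th prime number. Define $p^{(0)}_n=n$ and recursively $p^{(k+1)}_n=p_{p^{(k)}_n}$ for $k\in\mathbb N_0$. *)

From mathcomp Require Import ssreflect ssrfun ssrbool eqtype ssrnat prime.

Lemma next_prime_ex (m : nat) : exists p, (m < p) && prime p.
Proof. case: (prime_above m) => p Hp Hpr; exists p; by rewrite Hp Hpr. Qed.

Definition next_prime (m : nat) : nat := ex_minn (next_prime_ex m).

(* nth_prime n = p_n, the n-th prime, 1-indexed: p_1 = 2, p_2 = 3, ...
   (nth_prime 0 = 0 is a dummy value, never used below) *)
Fixpoint nth_prime (n : nat) : nat :=
  match n with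
  | 0 => 0
  | S n' => next_prime (nth_prime n')
  end.

(* iter_prime k n = p^{(k)}_n : p^{(0)}_n = n, p^{(k+1)}_n = p_{p^{(k)}_n} *)
Fixpoint iter_prime (k n : nat) : nat :=
  match k with
  | 0 => n
  | S k' => nth_prime (iter_prime k' n)
  end.

(* Each prime step at least doubles [m - 1]: the prime after an odd prime
   [p_n >= 2n - 1] cannot be the even number [2n], so [p_(n+1) >= 2n + 1].
   Hence [p^(k)_k - 1 >= 2^k (k - 1)], the terms of the series are at most
   [(2^(-alpha))^(k-1)], and the series is dominated by a geometric one. *)
From Stdlib Require Import Reals Lia Lra.
From Coquelicot Require Import Coquelicot.
From mathcomp Require Import ssreflect ssrfun ssrbool eqtype ssrnat prime.
From mathcomp Require Import zify.

Open Scope nat_scope.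

Lemma next_primeP (m : nat) : m < next_prime m /\ prime (next_prime m).
Proof. by rewrite /next_prime; case: ex_minnP => p /andP[]. Qed.

Lemma nth_prime_prime (n : nat) : 0 < n -> prime (nth_prime n).
Proof. by case: n => // n _; case: (next_primeP (nth_prime n)). Qed.

Lemma pred_nth_prime_ge (n : nat) : 2 * n.-1 <= (nth_prime n).-1.
Proof.
elim: n => [|[|m] IH] //; rewrite [nth_prime m.+2]/=.
set p := nth_prime m.+1 in IH *.
have p_gt1 : 1 < p by exact/prime_gt1/nth_prime_prime.
have [lt_pq q_prime] := next_primeP p.
set q := next_prime p in lt_pq q_prime *.
have q_odd : odd q by case: (even_prime q_prime) => // q2; lia.
have : q != (m.+1).*2 by apply: contraTneq q_odd => ->; rewrite odd_double.
rewrite -muln2; lia.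
Qed.

Lemma pred_iter_prime_ge (k n : nat) : 2 ^ k * n.-1 <= (iter_prime k n).-1.
Proof.
elim: k => [|k IH] /=; first by rewrite mul1n.
rewrite expnS -mulnA; apply: leq_trans (pred_nth_prime_ge _).
by rewrite leq_mul2l IH orbT.
Qed.

Lemma iter_prime_diag_ge (j : nat) : 2 ^ j <= iter_prime j.+1 j.+1.
Proof.
have := pred_iter_prime_ge j.+1 j.+1; case: j => [|j] /= le_iter.
  exact: prime_gt0 (nth_prime_prime 1 isT).
have : 2 ^ j.+1 <= 2 ^ j.+2 * j.+1 by rewrite (expnS 2 j.+1) mulnAC mulnC leq_pmulr.
lia.
Qed.

Lemma INR_expn (m n : nat) : INR (m ^ n) = (INR m ^ n)%R.
Proof. by elim: n => [|n IH] //; rewrite expnS -multE mult_INR IH. Qed.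

Open Scope R_scope.

Lemma ex_series_Rpower_opp_geometric_growth (c alpha : R) (a : nat -> R) :
  1 < c -> 0 < alpha -> (forall n, c ^ n <= a n) ->
  ex_series (fun n => Rpower (a n) (- alpha)).
Proof.
move=> c_gt1 alpha_gt0 a_ge.
set q := Rpower c (- alpha).
have q_gt0 : 0 < q by apply: exp_pos.
have q_lt1 : q < 1 by rewrite -(Rpower_O c); [apply: Rpower_lt; lra | lra].
apply: (ex_series_le _ (pow q)); last first.
  by apply: ex_series_geom; rewrite Rabs_pos_eq; lra.
move=> n.
have cn_gt0 : 0 < c ^ n by apply: pow_lt; lra.
have qn : q ^ n = Rpower (c ^ n) (- alpha).
  rewrite -!Rpower_pow; try lra.
  by rewrite /q !Rpower_mult Rmult_comm.
rewrite /norm /= /abs /= Rabs_pos_eq; last exact: Rlt_le (exp_pos _).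
rewrite qn !Rpower_Ropp; apply: Rinv_le_contravar; first exact: exp_pos.
by apply: Rle_Rpower_l; [lra | split].
Qed.

Theorem theorem13 (alpha : R) (Halpha : 0 < alpha) :
  ex_series (fun j : nat => Rpower (INR (iter_prime (S j) (S j))) (- alpha)).
Proof.
apply: (ex_series_Rpower_opp_geometric_growth 2); [lra | exact: Halpha | move=> j].
rewrite -[2]/(IZR (Z.of_nat 2)) -INR_IZR_INZ -INR_expn.
exact/le_INR/leP/iter_prime_diag_ge.
Qed.
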